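(* If $\alpha \in \mathbb{R}_{>0}$ is transcendental, then the additive monoid $M_\alpha = \{f(\alpha) \mid f(x) \in \mathbb{N}_0[x,x^{-1}]\}$ is atomic.
   Context: $\mathbb{N}_0[x,x^{-1}]$ denotes the semiring of Laurent polynomials with coefficients in $\mathbb{N}_0$. A (reduced, additive) monoid is atomic if every nonzero element is a sum of atoms, where an atom is a nonzero element that cannot be written as a sum of two nonzero elements. *)

From HB Require Import structures.
From mathcomp Require Import all_boot all_order all_algebra.
From mathcomp Require Import reals.
Set Implicit Arguments. Unset Strict Implicit. Unset Printing Implicit Defensive.
Import Order.TTheory GRing.Theory Num.Theory.
Local Open Scope ring_scope.

Definition transcendental (R : realType) (a : R) : Prop :=
  forall p : {poly rat}, p != 0 -> ~~ root (map_poly ratr p) a.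

(* Evaluation at a of the Laurent polynomial sum_i s_i x^(i - k) with
   coefficients s_i in N_0; every element of N_0[x,x^-1] has this form. *)
Definition laurent_eval (R : realType) (s : seq nat) (k : nat) (a : R) : R :=
  \sum_(i < size s) (nth 0%N s i)%:R * a ^ (i%:Z - k%:Z).

Definition in_M (R : realType) (a : R) (x : R) : Prop :=
  exists (s : seq nat) (k : nat), x = laurent_eval s k a.

Definition is_atom (R : realType) (a : R) (x : R) : Prop :=
  in_M a x /\ x != 0 /\
  ~ (exists y z : R, [/\ in_M a y, in_M a z, y != 0, z != 0 & x = y + z]).

Definition atomic_M (R : realType) (a : R) : Prop :=
  forall x : R, in_M a x -> x != 0 ->
    exists s : seq R, (forall y, y \in s -> is_atom a y) /\ x = \sum_(y <- s) y.

From HB Require Import structures.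
From mathcomp Require Import all_boot all_order all_algebra.
From mathcomp Require Import reals.
From mathcomp Require Import ring.
Set Implicit Arguments. Unset Strict Implicit. Unset Printing Implicit Defensive.
Import Order.TTheory GRing.Theory Num.Theory.
Local Open Scope ring_scope.

(* Every monomial a^n is an atom of M_a: if a^n = f(a) + g(a) with nonzero
   f, g in N_0[x,x^-1], then, a being transcendental, x^n = f + g holds as an
   identity of Laurent polynomials, and evaluating it at x = 1 gives
   1 = f(1) + g(1) >= 2.  Every element f(a) of M_a is a sum of monomials. *)

Section TranscendentalLaurentMonoid.
Variable R : realType.
Implicit Types (a : R) (s : seq nat) (i j k : nat).

Definition laurent_poly s : {poly rat} :=
  \sum_(i < size s) (nth 0%N s i)%:R *: 'X^i.

Definition monomial_seq j : seq nat := rcons (nseq j 0%N) 1%N.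

Definition monomial_terms s k a : seq R :=
  flatten (mkseq (fun i => nseq (nth 0%N s i) (a ^ (i%:Z - k%:Z))) (size s)).

Lemma sum_nth_sumn s : (\sum_(i < size s) nth 0%N s i)%N = sumn s.
Proof. by rewrite sumnE (big_nth 0%N) big_mkord. Qed.

Lemma transcendental_neq0 a : transcendental a -> a != 0.
Proof. by move=> /(_ 'X (negbT (polyX_eq0 _))); rewrite map_polyX rootX. Qed.

Lemma transcendental_root_eq0 a (p : {poly rat}) :
  transcendental a -> root (map_poly ratr p) a -> p = 0.
Proof. by move=> tr rpa; apply/eqP; apply: contraTT rpa => /tr. Qed.

Lemma horner_laurent_poly a s k : a != 0 ->
  (map_poly ratr (laurent_poly s)).[a] = laurent_eval s k a * a ^+ k.
Proof.
move=> a0; rewrite /laurent_poly /laurent_eval mulr_suml rmorph_sum horner_sum.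
apply: eq_bigr => i _; rewrite /= map_polyZ map_polyXn hornerZ hornerXn rmorph_nat.
by rewrite -mulrA !exprnP -expfzDr // addrNK.
Qed.

Lemma laurent_poly_at1 s : (laurent_poly s).[1] = (sumn s)%:R.
Proof.
rewrite /laurent_poly horner_sum -sum_nth_sumn natr_sum.
by apply: eq_bigr => i _; rewrite hornerZ hornerXn expr1n mulr1.
Qed.

Lemma laurent_eval_neq0_sumn_gt0 s k a : laurent_eval s k a != 0 -> (0 < sumn s)%N.
Proof.
apply: contraNT; rewrite -leqNgt leqn0 -sum_nth_sumn sum_nat_eq0 => /forallP s0.
by rewrite /laurent_eval big1 // => i _; rewrite (eqP (s0 i)) mul0r.
Qed.

(* Clearing denominators turns the relation into a polynomial with root a,
   which must vanish; evaluating it at 1 compares the coefficient sums. *)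
Lemma sumn_laurent_evalD a s k s1 k1 s2 k2 : transcendental a ->
  laurent_eval s k a = laurent_eval s1 k1 a + laurent_eval s2 k2 a ->
  sumn s = (sumn s1 + sumn s2)%N.
Proof.
move=> tr eval_sum; have a0 := transcendental_neq0 tr.
pose Q := laurent_poly s * 'X^(k1 + k2)
  - (laurent_poly s1 * 'X^(k + k2) + laurent_poly s2 * 'X^(k + k1)).
have rQ : root (map_poly ratr Q) a.
  apply/eqP; rewrite /Q rmorphB rmorphD !rmorphM /= !map_polyXn.
  rewrite hornerD hornerN hornerD !hornerM !hornerXn.
  rewrite (horner_laurent_poly s k a0) (horner_laurent_poly s1 k1 a0).
  by rewrite (horner_laurent_poly s2 k2 a0) eval_sum !exprD; ring.
move/eqP: (transcendental_root_eq0 tr rQ); rewrite subr_eq0 => /eqP.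
move=> /(congr1 (horner^~ 1)); rewrite hornerD !hornerM !hornerXn !expr1n.
by rewrite !mulr1 !laurent_poly_at1 -natrD => /eqP; rewrite eqr_nat => /eqP.
Qed.

Lemma laurent_eval_monomial_seq j k a :
  laurent_eval (monomial_seq j) k a = a ^ (j%:Z - k%:Z).
Proof.
rewrite /laurent_eval /monomial_seq size_rcons size_nseq big_ord_recr /= big1.
  by rewrite nth_rcons size_nseq ltnn eqxx add0r mul1r.
move=> i _; rewrite nth_rcons size_nseq (ltn_ord i) nth_nseq (ltn_ord i).
by rewrite mul0r.
Qed.

Lemma sumn_monomial_seq j : sumn (monomial_seq j) = 1%N.
Proof. by rewrite sumn_rcons sumn_nseq. Qed.

Lemma in_M_monomial a j k : in_M a (a ^ (j%:Z - k%:Z)).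
Proof. by exists (monomial_seq j), k; rewrite laurent_eval_monomial_seq. Qed.

Lemma is_atom_monomial a j k : transcendental a -> is_atom a (a ^ (j%:Z - k%:Z)).
Proof.
move=> tr; split; first exact: in_M_monomial.
split; first by rewrite expfz_neq0 ?transcendental_neq0.
case=> y [z [[s1 [k1 ->]] [s2 [k2 ->]] y0 z0]].
rewrite -laurent_eval_monomial_seq => /(sumn_laurent_evalD tr).
rewrite sumn_monomial_seq => sumn_s12.
have := leq_add (laurent_eval_neq0_sumn_gt0 y0) (laurent_eval_neq0_sumn_gt0 z0).
by rewrite -sumn_s12.
Qed.

Lemma laurent_eval_monomial_terms s k a :
  laurent_eval s k a = \sum_(y <- monomial_terms s k a) y.
Proof.
rewrite /monomial_terms big_flatten /= big_map -(subn0 (size s)) big_mkord.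
by apply: eq_bigr => i _; rewrite big_nseq iter_addr_0 mulr_natl.
Qed.

Lemma monomial_termsP s k a y :
  y \in monomial_terms s k a -> exists j, y = a ^ (j%:Z - k%:Z).
Proof. by case/flattenP=> _ /mapP[j _ ->] /nseqP[-> _]; exists j. Qed.

End TranscendentalLaurentMonoid.

Theorem corollary3p2 (R : realType) (alpha : R) :
  0 < alpha -> transcendental alpha -> atomic_M alpha.
Proof.
move=> _ tr x [s [k ->]] _; exists (monomial_terms s k alpha); split.
  by move=> y /monomial_termsP[j ->]; exact: is_atom_monomial.
exact: laurent_eval_monomial_terms.
Qed.
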